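(* Assume $m=n$. Let $\mathbf g=(g_1,\dots,g_n)\in\mathbb F_{q^m}^n$ have $\mathbb F_q$-linearly independent coordinates, let $1\le k\le n$, and let $V\subseteq\mathbb F_{q^m}$ be an $\mathbb F_q$-subspace of dimension $s$ with $0<s<m$. Then there exists $Q\in\mathcal L_{q^m}$ of $q$-degree $m-s$ such that $$\mathcal G(\mathbf g,k)\cap V^n=\Bigl\{\bigl((Q\circ A)(g_1),\dots,(Q\circ A)(g_n)\bigr)\;:\;A\in\mathcal L_{q^m},\ \deg_q(A)<k-(m-s)\Bigr\}.$$
   Context: A $q$-polynomial over $\mathbb F_{q^m}$ is $P(x)=\sum_{i=0}^d a_ix^{q^i}$, $a_i\in\mathbb F_{q^m}$; its $q$-degree is the largest $i$ with $a_i\ne0$ ($-\infty$ for $P=0$). $\mathcal L_{q^m}$ is the ring of $q$-polynomials under addition and composition $\circ$. The Gabidulin code is $\mathcal G(\mathbf g,k)=\{(F(g_1),\dots,F(g_n)):F\in\mathcal L_{q^m},\ \deg_qF<k\}$ (equivalently generated by the rows of $(g_j^{q^i})_{0\le i<k,\,1\le j\le n}$). $V^n=V\times\cdots\times V$ ($n$ times). *)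

From HB Require Import structures.
From mathcomp Require Import all_boot all_order all_algebra all_field.
Set Implicit Arguments. Unset Strict Implicit. Unset Printing Implicit Defensive.
Import GRing.Theory.
Local Open Scope ring_scope.

(* F plays the role of F_q (q = #|F|), L the role of F_{q^m} with
   m = \dim {:L} = [L : F].  A q-polynomial P(x) = sum_i a_i x^(q^i) is
   represented by its coefficient polynomial sum_i a_i 'X^i : {poly L}. *)

Definition qeval (F : finFieldType) (L : fieldExtType F) (P : {poly L}) (x : L) : L :=
  \sum_(i < size P) P`_i * x ^+ (#|F| ^ i)%N.

Definition qdeg_eq (L : nzRingType) (P : {poly L}) (d : nat) : bool :=
  (P != 0) && ((size P).-1 == d)%N.

Definition qdeg_lt (L : nzRingType) (P : {poly L}) (t : int) : bool :=
  (P == 0) || (((size P).-1)%:Z < t)%R.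

Definition in_gabidulin (F : finFieldType) (L : fieldExtType F) (n : nat)
    (g : n.-tuple L) (k : nat) (c : 'rV[L]_n) : Prop :=
  exists P : {poly L}, qdeg_lt P k%:Z /\ c = \row_j qeval P (tnth g j).

(* A nonzero q-polynomial of q-degree d has at most q^d roots, so its kernel
   has F_q-dimension at most d; by rank-nullity, a nonzero q-polynomial whose
   image lies in a subspace W has q-degree at least m - dim W.
   Let P_V be the subspace polynomial of V (q-degree s, kernel V).
   Left-dividing x^(q^m) - x by P_V leaves a remainder of q-degree < s with
   image in the (m - s)-dimensional image of P_V, so x^(q^m) - x = P_V o Q with
   deg_q Q = m - s, and Q maps into V.  Conversely, if a q-polynomial P maps the
   basis g, hence all of F_(q^m), into V, left-dividing P by Q leaves a
   remainder of q-degree < m - s mapping into V, so P = Q o A. *)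

From HB Require Import structures.
From mathcomp Require Import all_boot all_order all_algebra all_field.
From mathcomp Require Import zify.
Set Implicit Arguments. Unset Strict Implicit. Unset Printing Implicit Defensive.
Import GRing.Theory.
Local Open Scope ring_scope.

Lemma size_sub_lt_same_lead (R : nzRingType) (p r : {poly R}) : p != 0 ->
  size r = size p -> lead_coef r = lead_coef p -> (size (p - r)%R < size p)%N.
Proof.
move=> nzp size_r lead_r; have sizep : (0 < size p)%N by rewrite size_poly_gt0.
rewrite -(prednK sizep) ltnS; apply/leq_sizeP => j le_j.
rewrite coefB; move: le_j; rewrite leq_eqVlt => /orP[/eqP <- | lt_j].
  by move: lead_r; rewrite /lead_coef size_r => ->; rewrite subrr.
have le_p_j : (size p <= j)%N by rewrite -(prednK sizep).
by rewrite !nth_default ?subrr ?size_r.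
Qed.

Section QPolynomials.
Variables (F : finFieldType) (L : fieldExtType F).
Local Notation q := #|F|.
Local Notation m := (\dim {:L}).

Let q_gt1 : (1 < q)%N. Proof. exact: finNzRing_gt1. Qed.

Definition frob (i : nat) (x : L) : L := x ^+ (q ^ i).

Lemma pchar_nat_card_exp i : [pchar L].-nat (q ^ i)%N.
Proof.
have [p p_pr pchar_p] := finPcharP F.
rewrite (card_pprimeChar pchar_p) -expnM pnatX pnatE // (pchar_lalg L).
by rewrite pchar_p.
Qed.

Lemma frob_is_zmod_morphism i : zmod_morphism (frob i).
Proof.
by move=> x y; rewrite /frob exprDn_pchar ?exprNn_pchar ?pchar_nat_card_exp.
Qed.

Lemma frob_is_monoid_morphism i : monoid_morphism (frob i).
Proof. by split=> [|x y]; rewrite /frob ?expr1n ?exprMn. Qed.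

HB.instance Definition _ i :=
  GRing.isZmodMorphism.Build L L (frob i) (frob_is_zmod_morphism i).
HB.instance Definition _ i :=
  GRing.isMonoidMorphism.Build L L (frob i) (frob_is_monoid_morphism i).

Lemma frobD i j x : frob (i + j) x = frob j (frob i x).
Proof. by rewrite /frob expnD exprM. Qed.

Lemma frob_scalar i (a : F) : frob i a%:A = a%:A.
Proof.
elim: i => [|i IHi]; first by rewrite /frob expn0 expr1.
by rewrite -addn1 frobD IHi /frob expn1 -in_algE -rmorphXn expf_card.
Qed.

Lemma frob_dim x : frob m x = x.
Proof.
by have := Fermat's_little_theorem {:L}%AS x; rewrite memvf dimvf => /esym/eqP.
Qed.

Lemma frob_dimM j x : frob (m * j) x = x.
Proof.
elim: j => [|j IHj]; first by rewrite muln0 /frob expn0 expr1.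
by rewrite mulnS frobD frob_dim IHj.
Qed.

Lemma frobK i : cancel (frob (i * m.-1)) (frob i).
Proof.
have m_gt0 : (0 < m)%N := adim_gt0 {:L}%AS.
by move=> x; rewrite -frobD -mulnSr prednK // mulnC frob_dimM.
Qed.

Lemma qeval_widen (P : {poly L}) N : (size P <= N)%N ->
  forall x, qeval P x = \sum_(i < N) P`_i * frob i x.
Proof.
move=> leN x; rewrite /qeval (big_ord_widen N (fun i => P`_i * frob i x)) //.
rewrite big_mkcond; apply: eq_bigr => i _; case: ltnP => // le_P_i.
by rewrite nth_default ?mul0r.
Qed.

Lemma qeval0 x : qeval (0 : {poly L}) x = 0.
Proof. by rewrite /qeval size_poly0 big_ord0. Qed.

Lemma qevalD (P R : {poly L}) x : qeval (P + R) x = qeval P x + qeval R x.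
Proof.
pose N := maxn (size P) (size R).
rewrite !(@qeval_widen _ N) ?leq_maxl ?leq_maxr ?(leq_trans (size_polyD _ _)) //.
by rewrite -big_split; apply: eq_bigr => i _; rewrite coefD mulrDl.
Qed.

Lemma qevalN (P : {poly L}) x : qeval (- P) x = - qeval P x.
Proof.
rewrite (qeval_widen (eq_leq (size_polyN P))) -sumrN.
by apply: eq_bigr => i _; rewrite coefN mulNr.
Qed.

Lemma qevalB (P R : {poly L}) x : qeval (P - R) x = qeval P x - qeval R x.
Proof. by rewrite qevalD qevalN. Qed.

Lemma qeval_sum I (r : seq I) (Pr : pred I) (G : I -> {poly L}) x :
  qeval (\sum_(i <- r | Pr i) G i) x = \sum_(i <- r | Pr i) qeval (G i) x.
Proof. by apply: (big_morph (fun P => qeval P x)) => [P R|]; rewrite ?qevalD ?qeval0. Qed.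

Lemma qevalZ c (P : {poly L}) x : qeval (c *: P) x = c * qeval P x.
Proof.
rewrite (qeval_widen (size_scale_leq c P)) mulr_sumr.
by apply: eq_bigr => i _; rewrite coefZ mulrA.
Qed.

Lemma qevalMXn (P : {poly L}) i x : qeval (P * 'X^i) x = qeval P (frob i x).
Proof.
have le_size : (size (P * 'X^i)%R <= i + size P)%N.
  by have [->|nzP] := eqVneq P 0; rewrite ?mul0r ?size_poly0 // size_mulXn.
rewrite (qeval_widen le_size) big_split_ord /= big1 ?add0r => [|j _].
  by apply: eq_bigr => j _; rewrite coefMXn /= ltnNge leq_addr /= addKn frobD.
by rewrite coefMXn /= ltn_ord mul0r.
Qed.

Lemma qevalC c x : qeval (c%:P : {poly L}) x = c * x.
Proof.
by rewrite (qeval_widen (size_polyC_leq1 c)) big_ord1 coefC /frob expn0 expr1.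
Qed.

Lemma qevalX x : qeval ('X : {poly L}) x = frob 1 x.
Proof. by rewrite -['X]mul1r -[X in _ * X]expr1 qevalMXn qevalC mul1r. Qed.

Lemma qeval_map_frob i (A : {poly L}) x :
  qeval (map_poly (frob i) A) (frob i x) = frob i (qeval A x).
Proof.
rewrite (qeval_widen (eq_leq (size_map_poly _ A))) rmorph_sum.
by apply: eq_bigr => j _; rewrite coef_map rmorphM /= -!frobD addnC.
Qed.

Lemma qeval_is_linear (P : {poly L}) : linear (qeval P).
Proof.
move=> a x y; rewrite !(qeval_widen (leqnn _)) scaler_sumr -big_split.
apply: eq_bigr => i _.
rewrite rmorphD -[a *: x]mulr_algl rmorphM /= frob_scalar.
by rewrite mulrDr mulrCA mulr_algl.
Qed.

HB.instance Definition _ P :=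
  GRing.isLinear.Build F L L *:%R (qeval P) (qeval_is_linear P).

Definition qlin (P : {poly L}) : 'End(L) := linfun (qeval P).

Lemma qlinE P x : qlin P x = qeval P x.
Proof. exact: lfunE. Qed.

Definition qcomp (Q A : {poly L}) : {poly L} :=
  \sum_(i < size Q) Q`_i *: (map_poly (frob i) A * 'X^i).

Lemma qeval_qcomp (Q A : {poly L}) x : qeval (qcomp Q A) x = qeval Q (qeval A x).
Proof.
rewrite qeval_sum (qeval_widen (leqnn _)); apply: eq_bigr => i _.
by rewrite qevalZ qevalMXn qeval_map_frob.
Qed.

Lemma qcomp0r (Q : {poly L}) : qcomp Q 0 = 0.
Proof. by rewrite /qcomp big1 // => i _; rewrite map_poly0 mul0r scaler0. Qed.

Lemma qcompDr (Q A1 A2 : {poly L}) : qcomp Q (A1 + A2) = qcomp Q A1 + qcomp Q A2.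
Proof.
by rewrite /qcomp -big_split; apply: eq_bigr => i _; rewrite raddfD mulrDl scalerDr.
Qed.

Lemma size_qcomp_term (A : {poly L}) c i :
  (size (c *: (map_poly (frob i) A * 'X^i)) <= i + size A)%N.
Proof.
have [->|nzA] := eqVneq A 0; first by rewrite map_poly0 mul0r scaler0 size_poly0.
rewrite (leq_trans (size_scale_leq _ _)) // size_mulXn ?size_map_poly //.
by rewrite -size_poly_eq0 size_map_poly size_poly_eq0.
Qed.

Lemma size_lead_coef_qcomp (Q A : {poly L}) : Q != 0 -> A != 0 ->
  size (qcomp Q A) = (size Q + size A).-1 /\
  lead_coef (qcomp Q A) = lead_coef Q * frob (size Q).-1 (lead_coef A).
Proof.
move=> nzQ nzA; set d := (size Q).-1.
have sizeQ : size Q = d.+1 by rewrite prednK // size_poly_gt0.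
have sizeA : (0 < size A)%N by rewrite size_poly_gt0.
have nz_lead : Q`_d != 0 by rewrite lead_coef_eq0.
have nz_map : map_poly (frob d) A != 0.
  by rewrite -size_poly_eq0 size_map_poly size_poly_eq0.
have size_top : size (Q`_d *: (map_poly (frob d) A * 'X^d)) = (d + size A)%N.
  by rewrite size_scale // size_mulXn // size_map_poly addnC.
rewrite /qcomp sizeQ big_ord_recr /= -/d addrC.
set low := \sum_(i < d) _.
have lt_low : (size low < size (Q`_d *: (map_poly (frob d) A * 'X^d)))%N.
  rewrite size_top; apply: (big_ind (fun p : {poly L} => size p < d + size A)%N).
  - by rewrite size_poly0 addn_gt0 sizeA orbT.
  - by move=> p1 p2 lt1 lt2; rewrite (leq_ltn_trans (size_polyD _ _)) // gtn_max lt1.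
  by move=> i _; rewrite (leq_ltn_trans (size_qcomp_term _ _ _)) // ltn_add2r.
rewrite size_polyDl // lead_coefDl // size_top; split => //.
by rewrite lead_coefZ lead_coef_Mmonic ?monicXn // lead_coef_map.
Qed.

Lemma qdeg_lt_qcomp (Q A : {poly L}) (t : int) : Q != 0 ->
  qdeg_lt (qcomp Q A) t = qdeg_lt A (t - ((size Q).-1)%:Z).
Proof.
move=> nzQ; have [->|nzA] := eqVneq A 0; first by rewrite qcomp0r /qdeg_lt !eqxx.
have [size_QA _] := size_lead_coef_qcomp nzQ nzA.
have sizeQ : (0 < size Q)%N by rewrite size_poly_gt0.
have sizeA : (0 < size A)%N by rewrite size_poly_gt0.
have nzQA : qcomp Q A != 0 by rewrite -size_poly_gt0 size_QA; lia.
rewrite /qdeg_lt (negbTE nzQA) (negbTE nzA) /= size_QA.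
(* The [size] terms carry different canonical instances, which [lia] would
   treat as distinct atoms. *)
move: sizeQ sizeA; set a := size A; set b := size Q => *.
by apply/idP/idP; lia.
Qed.

Lemma qpoly_ldiv (D : {poly L}) : D != 0 ->
  forall P, exists A R, P = qcomp D A + R /\ (size R < size D)%N.
Proof.
move=> nzD P; have sizeD : (0 < size D)%N by rewrite size_poly_gt0.
elim: {P}(size P) {-2}P (leqnn (size P)) => [|N IHN] P le_P_N.
  by exists 0, P; rewrite qcomp0r add0r; split => //; lia.
have [lt_P_D|le_D_P] := ltnP (size P) (size D).
  by exists 0, P; rewrite qcomp0r add0r.
have nzP : P != 0 by rewrite -size_poly_gt0; lia.
set d := (size D).-1; set e := (size P - size D)%N.
(* [c] solves [lead_coef D * frob d c = lead_coef P]. *)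
set c := frob (d * m.-1) (lead_coef P / lead_coef D).
have nz_c : c != 0 by rewrite fmorph_eq0 mulf_neq0 ?invr_eq0 ?lead_coef_eq0.
have nz_cXe : c *: 'X^e != 0 by rewrite scaler_eq0 negb_or nz_c monic_neq0 ?monicXn.
have [size_T lead_T] := size_lead_coef_qcomp nzD nz_cXe.
have lt_size : (size (P - qcomp D (c *: 'X^e))%R < size P)%N.
  apply: size_sub_lt_same_lead => //.
    by rewrite size_T size_scale // size_polyXn addnS subnKC.
  by rewrite lead_T lead_coefZ lead_coefXn mulr1 frobK mulrC divfK ?lead_coef_eq0.
have [A [R [def_P lt_R_D]]] := IHN _ (leq_trans lt_size le_P_N).
exists (c *: 'X^e + A), R; split => //.
by rewrite qcompDr -addrA -def_P addrC subrK.
Qed.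

Definition qexpand (P : {poly L}) : {poly L} := \sum_(i < size P) P`_i *: 'X^(q ^ i).

Lemma horner_qexpand (P : {poly L}) x : (qexpand P).[x] = qeval P x.
Proof.
by rewrite horner_sum; apply: eq_bigr => i _; rewrite hornerZ hornerXn.
Qed.

Lemma size_qexpand (P : {poly L}) : P != 0 -> size (qexpand P) = (q ^ (size P).-1).+1.
Proof.
move=> nzP; set d := (size P).-1.
have sizeP : size P = d.+1 by rewrite prednK // size_poly_gt0.
have size_top : size (P`_d *: 'X^(q ^ d)) = (q ^ d).+1.
  by rewrite size_scale ?size_polyXn ?lead_coef_eq0.
rewrite /qexpand sizeP big_ord_recr /= -/d addrC size_polyDl size_top //.
apply: (big_ind (fun p : {poly L} => size p < (q ^ d).+1)%N); first by rewrite size_poly0.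
  by move=> p1 p2 lt1 lt2; rewrite (leq_ltn_trans (size_polyD _ _)) // gtn_max lt1.
move=> i _; rewrite ltnS (leq_trans (size_scale_leq _ _)) // size_polyXn.
by rewrite ltn_exp2l.
Qed.

Lemma qroots_dim_lt (P : {poly L}) (U : {vspace L}) : P != 0 ->
  (forall u, u \in U -> qeval P u = 0) -> (\dim U < size P)%N.
Proof.
move=> nzP PU0; pose rs := enum (U : {vspace finvect_type L}).
have : (size rs < size (qexpand P))%N.
  apply: max_poly_roots (enum_uniq _).
    by rewrite -size_poly_gt0 size_qexpand.
  apply/allP => x; rewrite mem_enum => Ux.
  by rewrite /root horner_qexpand PU0.
rewrite -cardE card_vspace size_qexpand // ltnS leq_exp2l // => le_dim.
by rewrite (leq_ltn_trans le_dim) // ltn_predL size_poly_gt0.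
Qed.

Lemma qpoly_small_image_eq0 (R : {poly L}) (W : {vspace L}) :
  (forall x, qeval R x \in W) -> (size R + \dim W <= m)%N -> R = 0.
Proof.
move=> RW le_size_dim; apply/eqP/negPn/negP => nzR.
have ker_lt : (\dim (lker (qlin R)) < size R)%N.
  by apply: qroots_dim_lt nzR _ => u; rewrite memv_ker qlinE => /eqP.
have img_sub : (qlin R @: fullv <= W)%VS.
  by apply/subvP => _ /memv_imgP[x _ ->]; rewrite qlinE.
have := leq_trans (leq_add ker_lt (dimvS img_sub)) le_size_dim.
by rewrite addSn -(capfv (lker (qlin R))) limg_ker_dim ltnn.
Qed.

Lemma subspace_poly_seq (us : seq L) : exists P : {poly L},
  size P = (size us).+1 /\ forall u, u \in us -> qeval P u = 0.
Proof.
elim: us => [|u us [P [size_P P_us]]]; first by exists 1; rewrite size_poly1.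
have nzP : P != 0 by rewrite -size_poly_gt0 size_P.
(* ['X - c%:P] is x^q - c x, which vanishes at 0 and at [qeval P u]. *)
pose c := qeval P u ^+ q.-1.
have nzXc : 'X - c%:P != 0 by rewrite polyXsubC_eq0.
have qeval_Xc y : qeval ('X - c%:P) y = y ^+ q - c * y.
  by rewrite qevalB qevalX qevalC /frob expn1.
exists (qcomp ('X - c%:P) P); split.
  by have [-> _] := size_lead_coef_qcomp nzXc nzP; rewrite size_XsubC size_P.
move=> v; rewrite inE qeval_qcomp => /predU1P[-> | /P_us ->].
  by rewrite qeval_Xc /c -exprSr prednK ?subrr // ltnW.
by rewrite raddf0.
Qed.

Lemma subspace_poly (V : {vspace L}) : exists P : {poly L},
  size P = (\dim V).+1 /\ lker (qlin P) = V.
Proof.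
have [P [size_P P_V]] := subspace_poly_seq (vbasis V).
rewrite size_tuple in size_P; exists P; split => //.
have nzP : P != 0 by rewrite -size_poly_gt0 size_P.
have sub_ker : (V <= lker (qlin P))%VS.
  rewrite -(span_basis (vbasisP V)); apply/span_subvP => u Vu.
  by rewrite memv_ker qlinE P_V.
apply/eqP; rewrite eq_sym eqEdim sub_ker -ltnS -size_P.
by apply: qroots_dim_lt => // u; rewrite memv_ker qlinE => /eqP.
Qed.

Lemma qpoly_onto_subspace (V : {vspace L}) : exists Q : {poly L},
  size Q = (m - \dim V).+1 /\ forall x, qeval Q x \in V.
Proof.
have [PV [size_PV ker_PV]] := subspace_poly V.
have nzPV : PV != 0 by rewrite -size_poly_gt0 size_PV.
have m_gt0 : (0 < m)%N := adim_gt0 {:L}%AS.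
have dimV_le : (\dim V <= m)%N by rewrite dimvS ?subvf.
pose Z : {poly L} := 'X^m - 1.
have Z0 x : qeval Z x = 0.
  by rewrite qevalB -['X^m]mul1r qevalMXn -polyC1 !qevalC !mul1r frob_dim subrr.
have [Q [R [def_Z size_R]]] := qpoly_ldiv nzPV Z.
have dim_img : \dim (qlin PV @: fullv) = (m - \dim V)%N.
  by rewrite -(limg_ker_dim (qlin PV) fullv) capfv ker_PV addKn.
have R0 : R = 0.
  apply: (@qpoly_small_image_eq0 _ (qlin PV @: fullv)); last by rewrite dim_img; lia.
  move=> x; have /eqP := Z0 x; rewrite def_Z qevalD qeval_qcomp addrC addr_eq0 => /eqP->.
  by rewrite rpredN -qlinE memv_img ?memvf.
rewrite R0 addr0 in def_Z.
have nzQ : Q != 0 by apply: contra_eq_neq def_Z => ->; rewrite qcomp0r -size_poly_gt0 size_XnsubC.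
exists Q; split.
  have [size_Z _] := size_lead_coef_qcomp nzPV nzQ.
  by move: size_Z; rewrite -def_Z size_XnsubC // size_PV; lia.
by move=> x; rewrite -ker_PV memv_ker qlinE -qeval_qcomp -def_Z Z0.
Qed.

Lemma gabidulin_cap_subspace n (g : n.-tuple L) (k : nat) (V : {vspace L})
    (Q : {poly L}) :
  <<g>>%VS = fullv -> Q != 0 -> ((size Q).-1 + \dim V)%N = m ->
  (forall x, qeval Q x \in V) ->
  forall c : 'rV[L]_n,
    (in_gabidulin g k c /\ (forall j, c 0 j \in V)) <->
    (exists A : {poly L},
        qdeg_lt A (k%:Z - ((size Q).-1)%:Z) /\
        c = \row_j qeval Q (qeval A (tnth g j))).
Proof.
move=> span_g nzQ dim_QV QV c; split.
  move=> [[P [deg_P ->]] cV].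
  have [A [R [def_P size_R]]] := qpoly_ldiv nzQ P.
  have R_g : (qlin R @: <<g>> <= V)%VS.
    rewrite limg_span; apply/span_subvP => _ /mapP[_ /tnthP[j ->] ->].
    rewrite qlinE -(addKr (qeval Q (qeval A (tnth g j))) (qeval R _)).
    by rewrite memvD ?memvN //; have := cV j; rewrite mxE def_P qevalD qeval_qcomp.
  have R0 : R = 0.
    apply: (@qpoly_small_image_eq0 _ V); last by rewrite -dim_QV; lia.
    by move=> x; rewrite -qlinE (subvP R_g) // span_g memv_img ?memvf.
  rewrite R0 addr0 in def_P; exists A; split.
    by rewrite -qdeg_lt_qcomp // -def_P.
  by apply/rowP => j; rewrite !mxE def_P qeval_qcomp.
move=> [A [deg_A ->]]; split; last by move=> j; rewrite mxE.
exists (qcomp Q A); split; first by rewrite qdeg_lt_qcomp.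
by apply/rowP => j; rewrite !mxE qeval_qcomp.
Qed.

End QPolynomials.

Theorem mainTheorem4 (F : finFieldType) (L : fieldExtType F) (n : nat)
    (g : n.-tuple L) (k s : nat) (V : {vspace L}) :
  n = \dim {: L}%VS ->
  free g ->
  (1 <= k <= n)%N ->
  \dim V = s ->
  (0 < s < \dim {: L}%VS)%N ->
  exists Q : {poly L},
    qdeg_eq Q (\dim {: L}%VS - s)%N /\
    forall c : 'rV[L]_n,
      (in_gabidulin g k c /\ (forall j, c 0 j \in V)) <->
      (exists A : {poly L},
          qdeg_lt A (k%:Z - ((\dim {: L}%VS)%:Z - s%:Z)) /\
          c = \row_j qeval Q (qeval A (tnth g j))).
Proof.
move=> dim_n free_g _ dim_V _.
have span_g : <<g>>%VS = fullv.
  by apply/eqP; rewrite eqEdim subvf (eqP free_g) size_tuple dim_n /=.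
have [Q [size_Q QV]] := qpoly_onto_subspace V.
have nzQ : Q != 0 by rewrite -size_poly_gt0 size_Q.
have dimV_le : (s <= \dim {:L})%N by rewrite -dim_V dimvS ?subvf.
exists Q; split; first by rewrite /qdeg_eq nzQ size_Q dim_V /=.
have -> : k%:Z - ((\dim {:L})%:Z - s%:Z) = k%:Z - ((size Q).-1)%:Z.
  by rewrite size_Q dim_V /=; lia.
by apply: gabidulin_cap_subspace => //; rewrite size_Q dim_V /=; lia.
Qed.
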